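(* Let $\mathcal{A}$ be an uncountable almost disjoint family of infinite subsets of $\omega$ and let $\mathcal{I}$ be an ideal. The following are equivalent: (a) $\Phi(\mathcal{A})$ is in $\mathrm{FinBW}(\mathcal{I})$; (b) for every $f\in\mathcal{D}_{\mathcal{I}}$ there is $B\notin\mathcal{I}$ such that $f|B$ is finite-to-one and $f[B]\in\mathrm{Fin}^2(\mathcal{A})$.
   Context: An ideal on an infinite countable set $X$ is a family $\mathcal{I}\subseteq\mathcal{P}(X)$ closed under subsets and finite unions, containing all finite subsets, with $X\notin\mathcal{I}$. A space $X$ is in $\mathrm{FinBW}(\mathcal{I})$ if $X$ is Hausdorff and for every sequence $(x_n)_{n\in\bigcup\mathcal{I}}$ in $X$ there is $A\notin\mathcal{I}$ with $(x_n)_{n\in A}$ convergent in $X$. $\mathcal{D}_{\mathcal{I}}$ is the set of functions $f:\bigcup\mathcal{I}\to\omega$ with $f^{-1}[\{n\}]\in\mathcal{I}$ for all $n$. For an almost disjoint family $\mathcal{A}$ (infinite subsets of $\omega$ with pairwise finite intersections), $\mathrm{Fin}^2(\mathcal{A})$ is the ideal on $\omega$ generated by the members of $\mathcal{A}$ together with all sets having finite intersection with every member of $\mathcal{A}$. $\Phi(\mathcal{A})$ is the space on $\omega\cup\mathcal{A}\cup\{\infty\}$ with points of $\omega$ isolated, basic neighbourhoods of $A\in\mathcal{A}$ of the form $\{A\}\cup(A\setminus F)$ ($F\subseteq\omega$ finite) and of $\infty$ of the form $\{\infty\}\cup(\mathcal{A}\setminus G)\cup(\omega\setminus(F\cup\bigcup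 G))$ ($F\subseteq\omega$, $G\subseteq\mathcal{A}$ finite). *)

From HB Require Import structures.
From mathcomp Require Import all_boot all_order.
From mathcomp Require Import boolp classical_sets functions cardinality.
From mathcomp Require Import topology.
Set Implicit Arguments. Unset Strict Implicit. Unset Printing Implicit Defensive.
Local Open Scope classical_set_scope.

(** Since it contains all finite sets,
    \bigcup I = [set: X]. *)
Definition ideal (X : Type) (I : set (set X)) : Prop :=
  [/\ (forall B C, I C -> B `<=` C -> I B),
      (forall B C, I B -> I C -> I (B `|` C)),
      (forall F, finite_set F -> I F) &
      ~ I setT].

Definition subseq_converges (X : Type) (T : topologicalType)
  (s : X -> T) (B : set X) (x : T) : Prop :=
  forall U, nbhs x U -> finite_set (B `&` [set n | ~ U (s n)]).

Definition FinBW (X : Type) (I : set (set X)) (T : topologicalType) : Prop :=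
  hausdorff_space T /\
  forall s : X -> T, exists B, ~ I B /\ exists x : T, subseq_converges s B x.

Definition D_ideal (X : Type) (I : set (set X)) (f : X -> nat) : Prop :=
  forall n, I (f @^-1` [set n]).

Definition finite_to_one_on (X : Type) (B : set X) (f : X -> nat) : Prop :=
  forall n, finite_set (B `&` f @^-1` [set n]).

Definition almost_disjoint (A : set (set nat)) : Prop :=
  (forall B, A B -> infinite_set B) /\
  (forall B C, A B -> A C -> B <> C -> finite_set (B `&` C)).

Definition Fin2_gen (A : set (set nat)) (S : set nat) : Prop :=
  A S \/ (forall B, A B -> finite_set (S `&` B)).

Definition Fin2 (A : set (set nat)) (S : set nat) : Prop :=
  exists s : seq (set nat), (forall G, G \in s -> Fin2_gen A G) /\
    S `<=` \big[setU/set0]_(G <- s) G.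

Inductive Phi_pt (A : set (set nat)) : Type :=
| PhiN of nat
| PhiA of {B : set nat | A B}
| PhiInf.

HB.instance Definition _ A := gen_eqMixin (Phi_pt A).
HB.instance Definition _ A := gen_choiceMixin (Phi_pt A).
HB.instance Definition _ A := isPointed.Build (Phi_pt A) (PhiInf A).

Definition Phi_basic (A : set (set nat)) (U : set (Phi_pt A)) : Prop :=
  (exists n : nat, U = [set PhiN A n]) \/
  (exists (B : {B : set nat | A B}) (F : set nat), finite_set F /\
     U = [set PhiA B] `|` [set PhiN A n | n in proj1_sig B `\` F]) \/
  (exists (F : set nat) (G : set (set nat)),
     [/\ finite_set F, finite_set G, G `<=` A &
     U = [set PhiInf A]
         `|` [set PhiA C | C in [set C : {C : set nat | A C} | ~ G (proj1_sig C)]]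
         `|` [set PhiN A n | n in [set n | ~ F n /\ forall C, G C -> ~ C n]]]).

Definition Phi (A : set (set nat)) : Type := Phi_pt A.
HB.instance Definition _ A := Choice.on (Phi A).
HB.instance Definition _ A := Pointed.on (Phi A).
HB.instance Definition _ A :=
  isSubBaseTopological.Build (Phi A) (@Phi_basic A) id.

From HB Require Import structures.
From mathcomp Require Import all_boot all_order.
From mathcomp Require Import boolp classical_sets functions cardinality.
From mathcomp Require Import topology.
From mathcomp Require Import finmap.
Set Implicit Arguments. Unset Strict Implicit. Unset Printing Implicit Defensive.
Local Open Scope classical_set_scope.

(* (a) => (b): read f in D_I as the sequence n |-> f n in the copy of omega
   inside Phi(A) and pick B notin I along which it converges.  The limit is not
   a point of omega, because the fibres of f lie in I; any other limit makes f
   finite-to-one on B, and f[B] is then almost contained in the limit when this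
   is a member of A, and almost disjoint from every member of A when it is oo.

   (b) => (a): a sequence s with an I-positive fibre is constant on it.
   Otherwise code s by some f in D_I sending a point of omega to itself and a
   point of A to one of its elements.  Given B notin I with f finite-to-one on B
   and f[B] in Fin^2(A), some generator G of Fin^2(A) has an I-positive
   preimage in B.  If G is almost disjoint from all of A, s converges to oo
   along it; if G is in A, either its points in omega converge to G, or the
   remaining ones, minus the fibre of G, converge to oo. *)

Section ideal_splitting.
Variables (X : Type) (I : set (set X)).
Hypothesis idealI : ideal I.

Lemma notin_ideal_split (B P : set X) : ~ I B -> ~ I (B `&` P) \/ ~ I (B `\` P).
Proof.
have [Isub IU _ _] := idealI.
move=> IB; apply: contrapT => /not_orP[/contrapT IBP /contrapT IBnP].
apply/IB/(Isub _ _ (IU _ _ IBP IBnP)) => x Bx.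
by have [Px|nPx] := pselect (P x); [left|right].
Qed.

Lemma notin_ideal_setD (B P : set X) : ~ I B -> I P -> ~ I (B `\` P).
Proof.
have [Isub _ _ _] := idealI.
move=> /(notin_ideal_split P)[IBP IP|//].
by exfalso; apply/IBP/(Isub _ _ IP) => x [].
Qed.

Lemma notin_ideal_big_setU (f : X -> nat) (l : seq (set nat)) (B : set X) :
  ~ I B -> f @` B `<=` \big[setU/set0]_(G <- l) G ->
  exists2 G, G \in l & ~ I (B `&` f @^-1` G).
Proof.
have [Isub _ Ifin _] := idealI.
elim: l B => [|G l IHl] B IB fBl.
  exfalso; apply/IB/(Isub _ set0); first exact/Ifin/finite_set0.
  by move=> x Bx; have := fBl (f x) (ex_intro2 _ _ x Bx erefl); rewrite big_nil.
have [IBG|IBnG] := notin_ideal_split (f @^-1` G) IB.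
  by exists G; rewrite ?mem_head.
have [|H Hl IBH] := IHl _ IBnG.
  move=> _ [x [Bx nGfx] <-].
  by have := fBl (f x) (ex_intro2 _ _ x Bx erefl); rewrite big_cons => -[].
exists H; first by rewrite in_cons Hl orbT.
by apply: contra_not IBH => /Isub; apply => x [[Bx _] Hfx].
Qed.

End ideal_splitting.

Lemma finite_fibres_preimage (T U : Type) (g : T -> U) (B : set T) (E : set U) :
  (forall y, E y -> finite_set (B `&` g @^-1` [set y])) -> finite_set E ->
  finite_set (B `&` g @^-1` E).
Proof.
move=> fib fE; apply: (@sub_finite_set _ _ (\bigcup_(y in E) (B `&` g @^-1` [set y]))).
  by move=> x [Bx Egx]; exists (g x).
exact: bigcup_finite.
Qed.

Lemma finite_to_one_onS (X : Type) (B C : set X) (f : X -> nat) :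
  B `<=` C -> finite_to_one_on C f -> finite_to_one_on B f.
Proof. by move=> BC ftoC n; apply: sub_finite_set (ftoC n) => x [/BC]. Qed.

Lemma subseq_converges_fibre (X : Type) (T : topologicalType) (s : X -> T) (x : T) :
  subseq_converges s (s @^-1` [set x]) x.
Proof.
move=> U /nbhs_singleton Ux; apply: sub_finite_set (finite_set0 X).
by move=> n [/= -> ].
Qed.

Section Fin2_ideal.
Variable A : set (set nat).

Lemma Fin2_gen_Fin2 (S : set nat) : Fin2_gen A S -> Fin2 A S.
Proof.
by move=> genS; exists [:: S]; split; [move=> G; rewrite inE => /eqP ->|rewrite big_seq1].
Qed.

Lemma Fin2U (S T : set nat) : Fin2 A S -> Fin2 A T -> Fin2 A (S `|` T).
Proof.
move=> [s [gens Ss]] [t [gent Tt]]; exists (s ++ t); split.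
  by move=> G; rewrite mem_cat => /orP[/gens|/gent].
by rewrite big_cat; exact: setUSS.
Qed.

Lemma Fin2S (S T : set nat) : S `<=` T -> Fin2 A T -> Fin2 A S.
Proof. by move=> ST [t [gent Tt]]; exists t; split => //; exact: subset_trans Tt. Qed.

End Fin2_ideal.

Definition Fin2_selective (X : Type) (I : set (set X)) (A : set (set nat)) : Prop :=
  forall f : X -> nat, D_ideal I f ->
    exists B : set X, ~ I B /\ finite_to_one_on B f /\ Fin2 A (f @` B).

Section Phi_space.
Variable A : set (set nat).
Hypothesis adA : almost_disjoint A.

Lemma sval_inj : injective (@sval _ A).
Proof. by case=> [b Ab] [c Ac] /= bc; exact: eq_exist. Qed.

Lemma Phi_basic_nbhs (V : set (Phi A)) (x : Phi A) : Phi_basic V -> V x -> nbhs x V.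
Proof.
move=> bV Vx; exists V; split => //.
exists [set V]; last by rewrite bigcup_set1.
move=> W ->; exists [fset V]%fset; last by rewrite set_fset1 bigcap_set1.
by move=> z; rewrite !inE => /eqP ->; exact/mem_set.
Qed.

Lemma subseq_converges_basic (X : Type) (s : X -> Phi A) (B : set X) (x : Phi A) :
  (forall V, Phi_basic V -> V x -> finite_set (B `&` [set n | ~ V (s n)])) ->
  subseq_converges s B x.
Proof.
move=> finV U [O [[D sD <-] [W DW Wx] OU]].
have [F sF WF] := sD W DW.
apply: (@sub_finite_set _ _ (\bigcup_(V in [set` F]) (B `&` [set n | ~ V (s n)]))).
  move=> n [Bn nU]; apply: contrapT => nbad; apply: nU; apply: OU; exists W => //=.
  rewrite -WF => V FV; apply: contrapT => nV; apply: nbad; by exists V.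
apply: bigcup_finite; first exact: finite_fset.
move=> V FV; apply: finV; first exact/set_mem/sF.
by move: Wx; rewrite -WF; apply.
Qed.

Definition Phi_nbhsA (b : {B : set nat | A B}) (F : set nat) : set (Phi A) :=
  [set PhiA b] `|` [set PhiN A n | n in sval b `\` F].

Definition Phi_nbhsInf (F : set nat) (G : set (set nat)) : set (Phi A) :=
  [set PhiInf A]
  `|` [set PhiA C | C in [set C : {C : set nat | A C} | ~ G (sval C)]]
  `|` [set PhiN A n | n in [set n | ~ F n /\ forall C, G C -> ~ C n]].

Lemma Phi_basic_PhiN n : Phi_basic [set PhiN A n].
Proof. by left; exists n. Qed.

Lemma Phi_nbhsA_basic b F : finite_set F -> Phi_basic (Phi_nbhsA b F).
Proof. by move=> fF; right; left; exists b, F. Qed.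

Lemma Phi_nbhsInf_basic F G : finite_set F -> finite_set G -> G `<=` A ->
  Phi_basic (Phi_nbhsInf F G).
Proof. by move=> fF fG GA; right; right; exists F, G. Qed.

Lemma Phi_nbhsA_self b F : Phi_nbhsA b F (PhiA b).
Proof. by left. Qed.

Lemma Phi_nbhsA_PhiN b F n : Phi_nbhsA b F (PhiN A n) <-> sval b n /\ ~ F n.
Proof.
split; first by case=> [//|[k [bk Fk] [<-]]].
by move=> bFn; right; exists n.
Qed.

Lemma Phi_nbhsA_PhiA b F c : Phi_nbhsA b F (PhiA c) -> c = b.
Proof. by case=> [[->]|[]]. Qed.

Lemma Phi_nbhsA_PhiInf b F : ~ Phi_nbhsA b F (PhiInf A).
Proof. by case=> [|[]]. Qed.

Lemma Phi_nbhsInf_self F G : Phi_nbhsInf F G (PhiInf A).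
Proof. by left; left. Qed.

Lemma Phi_nbhsInf_PhiN F G n :
  Phi_nbhsInf F G (PhiN A n) <-> ~ F n /\ forall C, G C -> ~ C n.
Proof.
split; first by case=> [[|[]]|[k Fk [<-]]].
by move=> FGn; right; exists n.
Qed.

Lemma notin_Phi_nbhsInf_PhiN F G n :
  ~ Phi_nbhsInf F G (PhiN A n) -> F n \/ exists2 C, G C & C n.
Proof.
move=> /Phi_nbhsInf_PhiN nV; apply: contrapT => /not_orP[nFn nGn].
by apply: nV; split => // C GC Cn; apply: nGn; exists C.
Qed.

Lemma Phi_nbhsInf_PhiA F G c : Phi_nbhsInf F G (PhiA c) <-> ~ G (sval c).
Proof.
split; first by case=> [[//|[C GC [<-]]]|[]].
by move=> Gc; left; right; exists c.
Qed.

Lemma Phi_basic_PhiInf V : Phi_basic V -> V (PhiInf A) ->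
  exists F G, [/\ finite_set F, finite_set G, G `<=` A & V = Phi_nbhsInf F G].
Proof.
case=> [[n ->]//|[[b [F [_ ->]]] /Phi_nbhsA_PhiInf//|[F [G [fF fG GA ->]]] _]].
by exists F, G.
Qed.

Lemma Phi_basic_PhiA V c : Phi_basic V -> V (PhiA c) ->
  (exists F, finite_set F /\ V = Phi_nbhsA c F) \/
  (exists F G, [/\ finite_set F, finite_set G, G `<=` A, V = Phi_nbhsInf F G
     & ~ G (sval c)]).
Proof.
case=> [[n ->]//|[[b [F [fF ->]]] /Phi_nbhsA_PhiA ->|[F [G [fF fG GA ->]]]]].
  by left; exists F.
by move=> /Phi_nbhsInf_PhiA Gc; right; exists F, G.
Qed.

Lemma Phi_nbhs_setC1_PhiN (p : Phi A) m : p <> PhiN A m -> nbhs p (~` [set PhiN A m]).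
Proof.
move=> pm; suff [V [bV Vp Vm]] : exists V, [/\ Phi_basic V, V p & ~ V (PhiN A m)].
  by apply: filterS (Phi_basic_nbhs bV Vp) => q Vq qm; apply: Vm; rewrite -qm.
case: p pm => [k|b|] pm.
- exists [set PhiN A k]; split => //; first exact: Phi_basic_PhiN.
  by move=> [km]; apply: pm; rewrite km.
- exists (Phi_nbhsA b [set m]); split; first exact/Phi_nbhsA_basic/finite_set1.
    exact: Phi_nbhsA_self.
  by move=> /Phi_nbhsA_PhiN[_]; apply.
- exists (Phi_nbhsInf [set m] set0); split; last by move=> /Phi_nbhsInf_PhiN[/(_ erefl)].
    exact: Phi_nbhsInf_basic (finite_set1 m) (finite_set0 _) (sub0set _).
  exact: Phi_nbhsInf_self.
Qed.

Definition Phi_separated (p q : Phi A) : Prop :=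
  exists U V, [/\ nbhs p U, nbhs q V & forall z, U z -> ~ V z].

Lemma Phi_separatedC p q : Phi_separated p q -> Phi_separated q p.
Proof. by move=> [U [V [pU qV UV]]]; exists V, U; split => // z Vz /UV. Qed.

Lemma Phi_separated_PhiN m p : p <> PhiN A m -> Phi_separated (PhiN A m) p.
Proof.
move=> pm; exists [set PhiN A m], (~` [set PhiN A m]); split.
- exact: Phi_basic_nbhs (Phi_basic_PhiN m) _.
- exact: Phi_nbhs_setC1_PhiN.
- by move=> z zm; apply.
Qed.

Lemma Phi_separated_PhiA a b : a <> b -> Phi_separated (PhiA a) (PhiA b).
Proof.
move=> ab; exists (Phi_nbhsA a (sval a `&` sval b)), (Phi_nbhsA b set0); split.
- apply/Phi_basic_nbhs/Phi_nbhsA_self/Phi_nbhsA_basic.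
  by apply: adA.2; [exact: svalP|exact: svalP|move/sval_inj].
- exact/Phi_basic_nbhs/Phi_nbhsA_self/Phi_nbhsA_basic/finite_set0.
- case=> [n /Phi_nbhsA_PhiN[an abn] /Phi_nbhsA_PhiN[bn _]|c|].
  + exact: abn.
  + by move=> /Phi_nbhsA_PhiA -> /Phi_nbhsA_PhiA.
  + by move=> /Phi_nbhsA_PhiInf.
Qed.

Lemma Phi_separated_PhiA_PhiInf a : Phi_separated (PhiA a) (PhiInf A).
Proof.
exists (Phi_nbhsA a set0), (Phi_nbhsInf set0 [set sval a]); split.
- exact/Phi_basic_nbhs/Phi_nbhsA_self/Phi_nbhsA_basic/finite_set0.
- apply/Phi_basic_nbhs/Phi_nbhsInf_self/Phi_nbhsInf_basic.
  + exact: finite_set0.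
  + exact: finite_set1.
  + by move=> _ ->; exact: svalP.
- case=> [n /Phi_nbhsA_PhiN[an _] /Phi_nbhsInf_PhiN[_]|c|].
  + by move/(_ (sval a) erefl).
  + by move=> /Phi_nbhsA_PhiA -> /Phi_nbhsInf_PhiA; apply.
  + by move=> /Phi_nbhsA_PhiInf.
Qed.

Lemma Phi_hausdorff : hausdorff_space (Phi A).
Proof.
suff sep p q : p <> q -> Phi_separated p q.
  move=> p q pq; apply: contrapT => /sep[U [V [pU qV UV]]].
  by have [z [Uz Vz]] := pq U V pU qV; exact: UV Vz.
case: p => [m|a|]; case: q => [m'|b|] pq.
- exact/Phi_separated_PhiN/nesym.
- exact/Phi_separated_PhiN/nesym.
- exact/Phi_separated_PhiN/nesym.
- exact/Phi_separatedC/Phi_separated_PhiN.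
- by apply: Phi_separated_PhiA => ab; apply: pq; rewrite ab.
- exact: Phi_separated_PhiA_PhiInf.
- exact/Phi_separatedC/Phi_separated_PhiN.
- exact/Phi_separatedC/Phi_separated_PhiA_PhiInf.
- by [].
Qed.

Lemma subseq_converges_PhiA (X : Type) (s : X -> Phi A) (B : set X) (c : {C | A C}) :
  (forall m, finite_set (B `&` s @^-1` [set PhiN A m])) ->
  s @` B `<=` PhiN A @` sval c ->
  subseq_converges s B (PhiA c).
Proof.
move=> fibN sB; apply: subseq_converges_basic => V bV Vc.
suff [E fE badE] : exists2 E, finite_set E & forall m, sval c m -> ~ V (PhiN A m) -> E m.
  have fibE y : (PhiN A @` E) y -> finite_set (B `&` s @^-1` [set y]).
    by move=> [m _ <-]; exact: fibN.
  apply: sub_finite_set (finite_fibres_preimage fibE (finite_image _ fE)).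
  move=> n [Bn nV]; split => //.
  have [m cm msn] := sB _ (ex_intro2 _ _ n Bn erefl).
  by exists m => //; apply: badE; rewrite // msn.
have [[F [fF ->]]|[F [G [fF fG GA -> Gc]]]] := Phi_basic_PhiA bV Vc.
  exists F => // m cm nV; apply: contrapT => nFm.
  by apply/nV/Phi_nbhsA_PhiN.
exists (F `|` \bigcup_(C in G) (sval c `&` C)).
  rewrite finite_setU; split => //; apply: bigcup_finite => // C GC.
  apply: adA.2; [exact: svalP|exact: GA|by move=> cC; apply: Gc; rewrite cC].
move=> m cm /notin_Phi_nbhsInf_PhiN[Fm|[C GC Cm]]; first by left.
by right; exists C.
Qed.

Lemma subseq_converges_PhiInf (X : Type) (s : X -> Phi A) (B : set X) :
  (forall m, finite_set (B `&` s @^-1` [set PhiN A m])) ->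
  (forall C, A C -> finite_set (B `&` s @^-1` (PhiN A @` C))) ->
  (forall c, finite_set (B `&` s @^-1` [set PhiA c])) ->
  subseq_converges s B (PhiInf A).
Proof.
move=> fibN fibC fibA; apply: subseq_converges_basic => V bV VI.
have [F [G [fF fG GA ->]]] := Phi_basic_PhiInf bV VI.
apply: (@sub_finite_set _ _ ((B `&` s @^-1` (PhiN A @` F))
    `|` \bigcup_(C in G) (B `&` s @^-1` (PhiN A @` C))
    `|` \bigcup_(c in sval @^-1` G) (B `&` s @^-1` [set PhiA c]))).
  move=> n [Bn /= nV]; case sn: (s n) nV => [m|a|] nV.
  - have [Fm|[C GC Cm]] := notin_Phi_nbhsInf_PhiN nV.
      by left; left; split => //; exists m.
    by left; right; exists C => //; split => //; exists m.
  - right; exists a; last by split.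
    by apply: contrapT => Ga; apply/nV/Phi_nbhsInf_PhiA.
  - by exfalso; exact/nV/Phi_nbhsInf_self.
rewrite !finite_setU; split; [split|].
- apply: finite_fibres_preimage (finite_image _ fF).
  by move=> _ [m _ <-]; exact: fibN.
- by apply: bigcup_finite => // C GC; exact/fibC/GA.
- apply: bigcup_finite => //; apply: finite_preimage fG.
  by move=> a b _ _; exact: sval_inj.
Qed.

Definition PhiN_seq (X : Type) (f : X -> nat) : X -> Phi A := PhiN A \o f.

Lemma PhiN_seq_limit_PhiN_ideal (X : Type) (I : set (set X)) (f : X -> nat)
    (B : set X) m :
  ideal I -> D_ideal I f -> subseq_converges (PhiN_seq f) B (PhiN A m) -> I B.
Proof.
move=> [Isub IU Ifin _] Df cv.
have fin_bad := cv _ (Phi_basic_nbhs (Phi_basic_PhiN m) erefl).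
apply: Isub (IU _ _ (Df m) (Ifin _ fin_bad)) _ => n Bn.
by have [fnm|fnm] := pselect (f n = m); [left|right; split => // -[]].
Qed.

Lemma PhiN_seq_finite_to_one (X : Type) (f : X -> nat) (B : set X) x :
  (forall m, x <> PhiN A m) -> subseq_converges (PhiN_seq f) B x ->
  finite_to_one_on B f.
Proof.
move=> xN cv k; apply: sub_finite_set (cv _ (Phi_nbhs_setC1_PhiN (xN k))).
by move=> n [Bn fnk]; split => //; rewrite /PhiN_seq /= fnk => /(_ erefl).
Qed.

Lemma PhiN_seq_limit_PhiA_Fin2 (X : Type) (f : X -> nat) (B : set X) a :
  subseq_converges (PhiN_seq f) B (PhiA a) -> Fin2 A (f @` B).
Proof.
move=> cv; set E := B `&` [set n | ~ Phi_nbhsA a set0 (PhiN A (f n))].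
have fE : finite_set E.
  exact: cv _ (Phi_basic_nbhs (Phi_nbhsA_basic a (finite_set0 _)) (Phi_nbhsA_self a set0)).
apply: (@Fin2S _ _ (sval a `|` f @` E)); last first.
  apply: Fin2U; apply: Fin2_gen_Fin2; first by left; exact: svalP.
  by right => C _; exact/finite_setIl/finite_image.
move=> _ [n Bn <-]; have [afn|nafn] := pselect (sval a (f n)); first by left.
by right; exists n => //; split => // /Phi_nbhsA_PhiN[].
Qed.

Lemma PhiN_seq_limit_PhiInf_Fin2 (X : Type) (f : X -> nat) (B : set X) :
  subseq_converges (PhiN_seq f) B (PhiInf A) -> Fin2 A (f @` B).
Proof.
move=> cv; apply: Fin2_gen_Fin2; right => C AinC.
have nbhsC : nbhs (PhiInf A : Phi A) (Phi_nbhsInf set0 [set C]).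
  apply: Phi_basic_nbhs (Phi_nbhsInf_self _ _).
  by apply: Phi_nbhsInf_basic; [exact: finite_set0|exact: finite_set1|move=> _ ->].
apply: sub_finite_set (finite_image f (cv _ nbhsC)) => _ [[n Bn <-] Cfn].
by exists n => //; split => // /Phi_nbhsInf_PhiN[_ /(_ C erefl)].
Qed.

Lemma FinBW_Phi_Fin2_selective (X : Type) (I : set (set X)) :
  ideal I -> FinBW I (Phi A) -> Fin2_selective I A.
Proof.
move=> idealI [_ FinBW_I] f Df.
have [B [IB [x cv]]] := FinBW_I (PhiN_seq f).
exists B; split => //.
have fto : (forall m, x <> PhiN A m) -> finite_to_one_on B f.
  by move=> xN; exact: PhiN_seq_finite_to_one xN cv.
case: x cv fto => [m|a|] cv fto.
- by exfalso; exact/IB/(PhiN_seq_limit_PhiN_ideal idealI Df cv).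
- by split; [exact: fto|exact: PhiN_seq_limit_PhiA_Fin2 cv].
- by split; [exact: fto|exact: PhiN_seq_limit_PhiInf_Fin2 cv].
Qed.

Section coding.
Variables (X : countType) (s : X -> Phi A).

(* A point [PhiA a] is coded by an element of [a] above [pickle n], so that
   every value of the code is taken by only finitely many such points. *)
Definition Phi_code (n : X) : nat :=
  match s n with
  | PhiN m => m
  | PhiA a => xget 0 (sval a `\` `I_(choice.pickle n))
  | PhiInf => 0
  end.

Lemma Phi_code_PhiN n m : s n = PhiN A m -> Phi_code n = m.
Proof. by rewrite /Phi_code => ->. Qed.

Lemma Phi_code_PhiA n a : s n = PhiA a ->
  sval a (Phi_code n) /\ (choice.pickle n <= Phi_code n)%N.
Proof.
rewrite /Phi_code => ->.
have /infinite_setN0 := infinite_setD (adA.1 _ (svalP a)) (finite_II (choice.pickle n)).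
by move=> /(xgetPex 0)[ak /negP]; rewrite -leqNgt.
Qed.

Lemma D_ideal_Phi_code (I : set (set X)) :
  ideal I -> (forall p, I (s @^-1` [set p])) -> D_ideal I Phi_code.
Proof.
move=> [Isub IU Ifin _] fibI k.
apply: (Isub _ (s @^-1` [set PhiN A k] `|` s @^-1` [set PhiInf A]
                `|` choice.pickle @^-1` `I_k.+1)).
  apply: IU (IU _ _ (fibI _) (fibI _)) _.
  apply/Ifin/finite_preimage; last exact: finite_II.
  by move=> x y _ _ /(pcan_inj pickleK_inv).
move=> n; rewrite /preimage /=; case sn: (s n) => [m|a|] codek.
- by left; left; rewrite -codek (Phi_code_PhiN sn).
- by right; rewrite ltnS -codek; exact: (Phi_code_PhiA sn).2.
- by left; right.
Qed.

Lemma Phi_code_PhiN_preimage C : s @^-1` (PhiN A @` C) `<=` Phi_code @^-1` C.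
Proof. by move=> n [m Cm msn]; rewrite /preimage /= (Phi_code_PhiN (esym msn)). Qed.

Lemma Phi_code_PhiA_preimage c : s @^-1` [set PhiA c] `<=` Phi_code @^-1` sval c.
Proof. by move=> n /Phi_code_PhiA[]. Qed.

Variables (B : set X) (G : set nat).
Hypotheses (ftoB : finite_to_one_on B Phi_code) (BG : B `<=` Phi_code @^-1` G).

Lemma Phi_code_fibre_PhiN m : finite_set (B `&` s @^-1` [set PhiN A m]).
Proof.
by apply: sub_finite_set (ftoB m) => n [Bn snm]; split => //; exact: Phi_code_PhiN.
Qed.

Lemma Phi_code_finite_preimage E : finite_set (G `&` E) ->
  finite_set (B `&` Phi_code @^-1` E).
Proof.
move=> fGE; apply: sub_finite_set (finite_fibres_preimage (fun m _ => ftoB m) fGE).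
by move=> n [Bn En]; split => //; split => //; exact: BG.
Qed.

Lemma Phi_code_converges_PhiA (AG : A G) :
  subseq_converges s (B `&` s @^-1` range (PhiN A)) (PhiA (exist _ G AG)).
Proof.
apply: subseq_converges_PhiA.
  move=> m; apply: sub_finite_set (Phi_code_fibre_PhiN m).
  by move=> n [[Bn _] snm].
move=> _ [n [Bn [m _ msn]] <-]; exists m => //=.
by rewrite -(Phi_code_PhiN (esym msn)); exact: BG.
Qed.

Lemma Phi_code_converges_PhiInf_PhiA (AG : A G) :
  subseq_converges s (B `\` s @^-1` range (PhiN A) `\` s @^-1` [set PhiA (exist _ G AG)])
    (PhiInf A).
Proof.
apply: subseq_converges_PhiInf.
- move=> m; apply: sub_finite_set (finite_set0 X) => n [[[_ nN] _] snm].
  by apply: nN; exists m.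
- move=> C _; apply: sub_finite_set (finite_set0 X) => n [[[_ nN] _] [m _ msn]].
  by apply: nN; exists m.
- move=> c; have [->|cG] := pselect (c = exist _ G AG).
    by apply: sub_finite_set (finite_set0 X) => n [[_ nG]].
  have fGc : finite_set (G `&` sval c).
    apply: adA.2 => //; first exact: svalP.
    by move=> Gc; apply: cG; apply: sval_inj.
  apply: sub_finite_set (Phi_code_finite_preimage fGc) => n [[[Bn _] _] snc].
  by split => //; exact: Phi_code_PhiA_preimage snc.
Qed.

Lemma Phi_code_converges_PhiInf : (forall C, A C -> finite_set (G `&` C)) ->
  subseq_converges s B (PhiInf A).
Proof.
move=> orthG; apply: subseq_converges_PhiInf.
- exact: Phi_code_fibre_PhiN.
- move=> C AinC; apply: sub_finite_set (Phi_code_finite_preimage (orthG _ AinC)).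
  by move=> n [Bn sn]; split => //; exact: Phi_code_PhiN_preimage.
- move=> c; apply: sub_finite_set (Phi_code_finite_preimage (orthG _ (svalP c))).
  by move=> n [Bn sn]; split => //; exact: Phi_code_PhiA_preimage.
Qed.

Lemma Phi_code_convergent_subseq (I : set (set X)) :
  ideal I -> (forall p, I (s @^-1` [set p])) -> ~ I B -> Fin2_gen A G ->
  exists B', ~ I B' /\ exists x : Phi A, subseq_converges s B' x.
Proof.
move=> idealI fibI IB [AG|orthG]; last first.
  by exists B; split => //; exists (PhiInf A); exact: Phi_code_converges_PhiInf.
have [IBN|IBnN] := notin_ideal_split idealI (s @^-1` range (PhiN A)) IB.
  by eexists; split; [exact: IBN|eexists; exact: Phi_code_converges_PhiA].
eexists; split; first exact: (notin_ideal_setD idealI IBnN (fibI (PhiA (exist _ G AG)))).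
by eexists; exact: Phi_code_converges_PhiInf_PhiA.
Qed.

End coding.

Lemma Fin2_selective_FinBW_Phi (X : countType) (I : set (set X)) :
  ideal I -> Fin2_selective I A -> FinBW I (Phi A).
Proof.
move=> idealI sel; split => [|s]; first exact: Phi_hausdorff.
have [[p Ip]|nfib] := pselect (exists p, ~ I (s @^-1` [set p])).
  by exists (s @^-1` [set p]); split => //; exists p; exact: subseq_converges_fibre.
have fibI p : I (s @^-1` [set p]) by apply: contrapT => Ip; apply: nfib; exists p.
have [B [IB [ftoB [l [genl fBl]]]]] := sel _ (D_ideal_Phi_code idealI fibI).
have [G Gl IBG] := notin_ideal_big_setU idealI IB fBl.
apply: (Phi_code_convergent_subseq _ _ idealI fibI IBG (genl G Gl)).
- by apply: finite_to_one_onS ftoB => n [].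
- by move=> n [].
Qed.

End Phi_space.

Theorem proposition5p2 (X : countType) (A : set (set nat)) (I : set (set X)) :
  infinite_set [set: X] ->
  almost_disjoint A -> ~ countable A ->
  ideal I ->
  (FinBW I (Phi A) <->
   (forall f : X -> nat, D_ideal I f ->
      exists B : set X, ~ I B /\ finite_to_one_on B f /\ Fin2 A (f @` B))).
Proof.
move=> _ adA _ idealI; split.
- exact: FinBW_Phi_Fin2_selective.
- exact: Fin2_selective_FinBW_Phi.
Qed.
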